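(* Let $n\ge2$, $\epsilon=\pm$, and $\lambda=(\lambda_1\ge\lambda_2\ge\dots\ge\lambda_r\ge0)$ a partition of $n$ with $\lambda_1\le n/2$. Then the unipotent character $\psi^\lambda$ of $\mathrm{GL}^\epsilon_n(q)$ satisfies $\psi^\lambda(1)\ge q^{n^2/4}$.
   Context: $\mathrm{GL}^+_n(q)=\mathrm{GL}_n(q)$, $\mathrm{GL}^-_n(q)=\mathrm{GU}_n(q)$. Unipotent characters $\psi^\lambda$ are labeled by partitions $\lambda\vdash n$ in the standard way ($(n)$ trivial, $(1^n)$ Steinberg), with degree given by $\psi^\lambda(1)=q^{a(\lambda)}\prod_{i=1}^n(q^i-\epsilon^i)/\prod_h(q^{l(h)}-\epsilon^{l(h)})$, where $a(\lambda)=\sum_i(i-1)\lambda_i$, $h$ runs over the hooks of the Young diagram of $\lambda$ and $l(h)$ is the hook length. *)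

From Stdlib Require Import Reals Arith List ZArith Znumtheory.
Open Scope R_scope.

(* A partition of n: a (finite) nonincreasing list of naturals
   lambda_1 >= lambda_2 >= ... >= lambda_r >= 0 summing to n.
   Trailing zero parts are allowed, as in the paper. *)
Definition is_partition (l : list nat) (n : nat) : Prop :=
  (forall i : nat, (nth (S i) l 0 <= nth i l 0)%nat) /\
  fold_right Nat.add 0%nat l = n.

(* lambda_i, 1-indexed *)
Definition part (l : list nat) (i : nat) : nat := nth (i - 1) l 0%nat.

Definition conj_part (l : list nat) (j : nat) : nat :=
  length (filter (fun x => Nat.leb j x) l).

(* a(lambda) = sum_i (i-1) lambda_i *)
Fixpoint a_aux (k : nat) (l : list nat) : nat :=
  match l with
  | nil => 0%nat
  | x :: t => (k * x + a_aux (S k) t)%nat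
  end.
Definition a_inv (l : list nat) : nat := a_aux 0 l.

Definition hook_lengths (l : list nat) : list nat :=
  flat_map (fun i =>
    map (fun j => ((part l i - j) + (conj_part l j - i) + 1)%nat)
        (seq 1 (part l i)))
    (seq 1 (length l)).

Definition prodR (s : list R) : R := fold_right Rmult 1 s.

Definition unip_degree (q : nat) (eps : R) (n : nat) (l : list nat) : R :=
  (INR q) ^ (a_inv l)
  * prodR (map (fun i => INR q ^ i - eps ^ i) (seq 1 n))
  / prodR (map (fun h => INR q ^ h - eps ^ h) (hook_lengths l)).

Definition prime_power (q : nat) : Prop :=
  exists (p : Z) (k : nat), prime p /\ (1 <= k)%nat /\ Z.of_nat q = (p ^ Z.of_nat k)%Z.

(* Write [q^k - eps^k = q^k f(k)] with [f(k) = 1 - (eps/q)^k]. The hook lengths satisfy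
   [sum_h h = a(lam) + n(n+1)/2 - (n^2 - sum_i lam_i^2)/2], so the degree is [q^D N / H] with
   [2D = n^2 - sum_i lam_i^2], [N = prod_{i<=n} f(i)] and [H = prod_h f(h)]; since every part
   is at most [n/2], [sum_i lam_i^2 <= n^2/2] and [D >= n^2/4].
   For [eps = 1], [f] is increasing and the hooks of each row are dominated termwise by a block
   of [1..n], so [H <= N]. For [eps = -1], a product of consecutive factors starting at an odd
   (even) index is at least (at most) 1, so [N >= 1]; the hooks of a row are distinct, so their
   product is at most the product of the [f(b) = 1 + q^-b], [b] odd, which is [<= 1 + 2/q <= q].
   Thus [H <= q^r] for [r] nonzero rows, enough whenever [2 sum_i lam_i^2 + 4r <= n^2]. By a
   computation for [n <= 20] and an estimate beyond, the only other partitions are [(m, m)],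
   where again [H <= N], and nine small ones, settled by polynomial certificates in [q - 2]. *)

From Stdlib Require Import Reals Arith List ZArith Znumtheory Lra Lia Bool Sorting.Sorted.
Import ListNotations.

Local Open Scope nat_scope.

(** * Hook lengths *)

Definition sum_sq (l : list nat) : nat := list_sum (map (fun x => x * x) l).

(* The box (1, j) of the diagram of [x :: t] has arm [x - j] and leg [conj_part t j]. *)
Definition first_row_hooks (x : nat) (t : list nat) : list nat :=
  map (fun j => x - j + conj_part t j + 1) (seq 1 x).

Lemma list_sum_cons x l : list_sum (x :: l) = x + list_sum l.
Proof. reflexivity. Qed.

Lemma sum_sq_cons x l : sum_sq (x :: l) = x * x + sum_sq l.
Proof. reflexivity. Qed.

Lemma list_sum_map_add {A} (f g : A -> nat) (l : list A) :
  list_sum (map (fun a => f a + g a) l) = list_sum (map f l) + list_sum (map g l).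
Proof. induction l as [|a l IH]; simpl; [reflexivity | rewrite IH; lia]. Qed.

Lemma twice_sum_seq n : 2 * list_sum (seq 1 n) = n * (n + 1).
Proof.
  induction n as [|n IH]; [reflexivity|].
  rewrite seq_S, list_sum_app; simpl. lia.
Qed.

Lemma twice_sum_rev_seq x : 2 * list_sum (map (fun j => x - j + 1) (seq 1 x)) = x * (x + 1).
Proof.
  induction x as [|x IH]; [reflexivity|].
  cbn [seq map list_sum fold_right]. rewrite <- seq_shift, map_map.
  erewrite map_ext_in by (intros j Hj; apply in_seq in Hj;
    replace (S x - S j + 1) with (x - j + 1) by lia; reflexivity).
  change (fold_right Nat.add 0) with list_sum. lia.
Qed.

Lemma sum_sq_le_sq_sum l : sum_sq l <= list_sum l * list_sum l.
Proof. induction l as [|x l IH]; [reflexivity|]. rewrite sum_sq_cons, list_sum_cons. nia. Qed.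

Lemma sum_sq_le l c : Forall (ge c) l -> sum_sq l <= c * list_sum l.
Proof.
  induction 1 as [|x l Hx _ IH]; [apply Nat.le_0_l|].
  rewrite sum_sq_cons, list_sum_cons. unfold ge in Hx. nia.
Qed.

Lemma length_le_sum l : Forall (lt 0) l -> length l <= list_sum l.
Proof. induction 1; rewrite ?list_sum_cons; simpl length; lia. Qed.

Lemma conj_part_cons x t j :
  conj_part (x :: t) j = (if j <=? x then 1 else 0) + conj_part t j.
Proof. unfold conj_part; simpl. destruct (j <=? x); reflexivity. Qed.

Lemma conj_part_le_sum t j : 1 <= j -> conj_part t j <= list_sum t.
Proof.
  intros Hj. induction t as [|x t IH]; [cbv; lia|].
  rewrite conj_part_cons, list_sum_cons. destruct (Nat.leb_spec j x); lia.
Qed.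

Lemma conj_part_antitone t j k : j <= k -> conj_part t k <= conj_part t j.
Proof.
  intros Hjk. induction t as [|x t IH]; [cbv; lia|].
  rewrite !conj_part_cons. destruct (Nat.leb_spec k x), (Nat.leb_spec j x); lia.
Qed.

Lemma sum_indicator_seq x y :
  list_sum (map (fun j => if j <=? y then 1 else 0) (seq 1 x)) = Nat.min x y.
Proof.
  induction x as [|x IH]; [reflexivity|].
  rewrite seq_S, map_app, list_sum_app, IH. cbn [map]. rewrite list_sum_cons.
  change (list_sum []) with 0. destruct (Nat.leb_spec (1 + x) y); lia.
Qed.

(* Counting the boxes of t column by column. *)
Lemma sum_conj_part t x : Forall (ge x) t ->
  list_sum (map (conj_part t) (seq 1 x)) = list_sum t.
Proof.
  induction 1 as [|y t Hy _ IH]; [induction (seq 1 x); simpl; auto|].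
  erewrite map_ext by (intros j; apply conj_part_cons).
  rewrite list_sum_map_add, sum_indicator_seq, IH, list_sum_cons. lia.
Qed.

Lemma StronglySorted_map_seq (h : nat -> nat) s n :
  (forall j, s <= j -> S j < s + n -> h (S j) < h j) -> StronglySorted gt (map h (seq s n)).
Proof.
  intros Hh. apply Sorted_StronglySorted; [unfold Relations_1.Transitive, gt; lia|].
  revert s Hh. induction n as [|n IH]; intros s Hh; [constructor|].
  cbn [seq map]. constructor.
  - apply IH. intros j Hj Hjn. apply Hh; lia.
  - destruct n as [|n]; constructor. apply Hh; lia.
Qed.

Lemma hook_lengths_cons x t : Forall (ge x) t ->
  hook_lengths (x :: t) = first_row_hooks x t ++ hook_lengths t.
Proof.
  intros Hx. unfold hook_lengths. cbn [length seq flat_map]. f_equal.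
  - unfold first_row_hooks, part. simpl. apply map_ext_in.
    intros j Hj. apply in_seq in Hj. rewrite conj_part_cons.
    destruct (Nat.leb_spec j x); lia.
  - rewrite <- seq_shift, !flat_map_concat_map, map_map. f_equal.
    apply map_ext_in. intros i Hi. apply in_seq in Hi.
    unfold part. replace (S i - 1) with (S (i - 1)) by lia. simpl nth.
    assert (nth (i - 1) t 0 <= x).
    { destruct (nth_in_or_default (i - 1) t 0) as [Hin | ->]; [|lia].
      rewrite Forall_forall in Hx. apply Hx, Hin. }
    apply map_ext_in. intros j Hj. apply in_seq in Hj.
    rewrite conj_part_cons. destruct (Nat.leb_spec j x); lia.
Qed.

Lemma twice_sum_first_row_hooks x t : Forall (ge x) t ->
  2 * list_sum (first_row_hooks x t) = x * x + x + 2 * list_sum t.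
Proof.
  intros Hx. unfold first_row_hooks.
  erewrite map_ext by (intros j; replace (x - j + conj_part t j + 1)
                         with ((x - j + 1) + conj_part t j) by lia; reflexivity).
  rewrite list_sum_map_add, Nat.mul_add_distr_l, twice_sum_rev_seq, sum_conj_part by exact Hx.
  lia.
Qed.

Lemma a_aux_succ k t : a_aux (S k) t = list_sum t + a_aux k t.
Proof.
  revert k; induction t as [|x t IH]; intros k; [reflexivity|].
  simpl a_aux. rewrite IH, IH, list_sum_cons. lia.
Qed.

Lemma a_inv_cons x t : a_inv (x :: t) = list_sum t + a_inv t.
Proof. unfold a_inv. simpl. rewrite a_aux_succ. lia. Qed.

Lemma twice_sum_hook_lengths l : StronglySorted ge l ->
  2 * list_sum (hook_lengths l) = 2 * a_inv l + list_sum l + sum_sq l.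
Proof.
  induction 1 as [|x t _ IH Hx]; [reflexivity|].
  rewrite hook_lengths_cons, list_sum_app, Nat.mul_add_distr_l, twice_sum_first_row_hooks, IH,
    a_inv_cons by exact Hx.
  rewrite list_sum_cons, sum_sq_cons. lia.
Qed.

Lemma hook_lengths_pos l : Forall (le 1) (hook_lengths l).
Proof.
  apply Forall_forall. unfold hook_lengths. intros h Hh.
  apply in_flat_map in Hh as [i [_ Hh]]. apply in_map_iff in Hh as [j [<- _]]. lia.
Qed.

(** * Trailing zero parts *)

Lemma StronglySorted_of_nth l : (forall i, nth (S i) l 0 <= nth i l 0) -> StronglySorted ge l.
Proof.
  induction l as [|x t IH]; intros Hl; constructor.
  - apply IH. intros i. apply (Hl (S i)).
  - apply Forall_forall. intros y Hy. apply In_nth with (d := 0) in Hy as [k [_ <-]].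
    enough (Hhead : forall k, nth k (x :: t) 0 <= x) by apply (Hhead (S k)).
    intros k'. induction k' as [|k' IHk]; [simpl; lia|]. specialize (Hl k'). lia.
Qed.

Lemma StronglySorted_app_l {A} (R : A -> A -> Prop) p s :
  StronglySorted R (p ++ s) -> StronglySorted R p.
Proof.
  induction p as [|x p IH]; intros H; [constructor|].
  apply StronglySorted_inv in H as [Hp Hx]. constructor; [now apply IH|].
  rewrite Forall_forall in *. intros y Hy. apply Hx, in_or_app. now left.
Qed.

Lemma sorted_split_zeros l : StronglySorted ge l ->
  exists p k, l = p ++ repeat 0 k /\ Forall (lt 0) p.
Proof.
  induction 1 as [|x t _ [p [k [-> Hp]]] Hx]; [now exists [], 0|].
  destruct x as [|x].
  - destruct p as [|y p].
    + now exists [], (S k).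
    + inversion Hx as [|? ? Hy]. inversion Hp. lia.
  - exists (S x :: p), k. split; [reflexivity|]. constructor; [lia | exact Hp].
Qed.

Lemma partition_positive_parts lam n : is_partition lam n ->
  exists p k, lam = p ++ repeat 0 k /\ StronglySorted ge p /\ Forall (lt 0) p /\ list_sum p = n.
Proof.
  intros [Hnth Hsum]. pose proof (StronglySorted_of_nth lam Hnth) as Hs.
  destruct (sorted_split_zeros lam Hs) as [p [k [-> Hp]]].
  exists p, k. split; [reflexivity|]. split; [now apply StronglySorted_app_l in Hs|].
  split; [exact Hp|].
  rewrite <- Hsum. fold (list_sum (p ++ repeat 0 k)). rewrite list_sum_app.
  enough (list_sum (repeat 0 k) = 0) by lia. clear. induction k; auto.
Qed.

Lemma conj_part_app_zeros p k j : 1 <= j -> conj_part (p ++ repeat 0 k) j = conj_part p j.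
Proof.
  intros Hj. unfold conj_part. rewrite filter_app, length_app.
  enough (filter (fun x => j <=? x) (repeat 0 k) = []) as -> by (simpl; lia).
  induction k as [|k IH]; [reflexivity|]. simpl. now destruct (Nat.leb_spec j 0); [lia|].
Qed.

Lemma hook_lengths_app_zeros p k : StronglySorted ge (p ++ repeat 0 k) ->
  hook_lengths (p ++ repeat 0 k) = hook_lengths p.
Proof.
  induction p as [|x t IH]; intros H.
  - induction k as [|k IHk]; [reflexivity|].
    apply StronglySorted_inv in H as [H Hx]. cbn [app repeat].
    rewrite hook_lengths_cons by exact Hx. exact (IHk H).
  - apply StronglySorted_inv in H as [Ht Hx]. simpl (_ ++ _).
    assert (Hx' : Forall (ge x) t).
    { rewrite Forall_forall in *. intros y Hy. apply Hx, in_or_app. now left. }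
    rewrite !hook_lengths_cons, IH by assumption. f_equal.
    apply map_ext_in. intros j Hj. apply in_seq in Hj. now rewrite conj_part_app_zeros by lia.
Qed.

Lemma a_aux_app_zeros i p k : a_aux i (p ++ repeat 0 k) = a_aux i p.
Proof.
  revert i. induction p as [|x t IH]; intros i; simpl.
  - revert i; induction k as [|k IHk]; intros i; simpl; [reflexivity | rewrite IHk; lia].
  - now rewrite IH.
Qed.

Lemma unip_degree_app_zeros q eps n p k : StronglySorted ge (p ++ repeat 0 k) ->
  unip_degree q eps n (p ++ repeat 0 k) = unip_degree q eps n p.
Proof.
  intros H. unfold unip_degree, a_inv. now rewrite hook_lengths_app_zeros, a_aux_app_zeros.
Qed.

(** * Classification of the partitions *)

Lemma sorted_le_head x t : StronglySorted ge (x :: t) -> Forall (ge x) (x :: t).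
Proof.
  intros H. apply StronglySorted_inv in H as [_ H]. constructor; [unfold ge; lia | exact H].
Qed.

(* Nonincreasing lists of positive parts at most [k] summing to [n], provided [n <= fuel]. *)
Fixpoint partitions_le (fuel n k : nat) : list (list nat) :=
  match fuel with
  | 0 => [[]]
  | S fuel =>
      if n =? 0 then [[]]
      else flat_map (fun j => map (cons j) (partitions_le fuel (n - j) j)) (seq 1 (Nat.min n k))
  end.

Lemma in_partitions_le l fuel n k :
  StronglySorted ge l -> Forall (lt 0) l -> Forall (ge k) l -> list_sum l = n -> n <= fuel ->
  In l (partitions_le fuel n k).
Proof.
  revert fuel n k. induction l as [|x t IH]; intros fuel n k Hs Hpos Hk Hn Hfuel.
  - destruct fuel; simpl; [auto|]. rewrite <- Hn. simpl. auto.
  - apply StronglySorted_inv in Hs as [Hs Hx]. inversion Hpos as [|? ? Hx0 Ht]; subst.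
    inversion Hk as [|? ? Hxk _]; subst. rewrite list_sum_cons in Hfuel |- *.
    destruct fuel as [|fuel]; [lia|]. simpl.
    destruct (Nat.eqb_spec (x + list_sum t) 0); [lia|].
    apply in_flat_map. exists x. split; [apply in_seq; lia|].
    apply in_map, IH; auto; lia.
Qed.

Definition exceptional_partitions : list (list nat) :=
  [[1;1;1]; [2;1;1]; [1;1;1;1]; [2;2;1]; [2;1;1;1]; [1;1;1;1;1]; [3;2;1]; [3;1;1;1]; [3;3;1]].

Definition classification_holds (n : nat) (l : list nat) : bool :=
  (length l <? 3) || (2 * sum_sq l + 4 * length l <=? n * n)
  || (if In_dec (list_eq_dec Nat.eq_dec) l exceptional_partitions then true else false).

Lemma partitions_le_classification n : n <= 20 ->
  forallb (classification_holds n) (partitions_le n n (n / 2)) = true.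
Proof. intros Hn. do 21 (destruct n as [|n]; [vm_compute; reflexivity|]). lia. Qed.

Lemma classify_small p n :
  StronglySorted ge p -> Forall (lt 0) p -> list_sum p = n -> 2 * hd 0 p <= n -> n <= 20 ->
  length p < 3 \/ 2 * sum_sq p + 4 * length p <= n * n \/ In p exceptional_partitions.
Proof.
  intros Hs Hpos Hn Hhd Hsmall.
  assert (Hin : In p (partitions_le n n (n / 2))).
  { apply in_partitions_le; auto.
    destruct p as [|x t]; [constructor|].
    assert (x <= n / 2) by (apply Nat.div_le_lower_bound; simpl in Hhd; lia).
    eapply Forall_impl; [|exact (sorted_le_head x t Hs)]. unfold ge. lia. }
  pose proof (proj1 (forallb_forall _ _) (partitions_le_classification n Hsmall) p Hin) as Hc.
  unfold classification_holds in Hc.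
  apply orb_true_iff in Hc as [Hc|Hc]; [apply orb_true_iff in Hc as [Hc|Hc]|].
  - left. now apply Nat.ltb_lt.
  - right; left. now apply Nat.leb_le.
  - right; right. now destruct In_dec.
Qed.

Lemma large_partition_arith x y R r sq n :
  n = x + y + R -> 1 <= y <= x -> 2 * x <= n -> 1 <= R -> r <= 2 + R ->
  sq <= x * n -> sq <= x * x + y * (y + R) -> 21 <= n -> 2 * sq + 4 * r <= n * n.
Proof.
  intros Hn Hy Hx HR Hr Hsq1 Hsq2 Hlarge.
  destruct (Nat.le_gt_cases 4 (n - 2 * x)) as [Hw|Hw].
  - nia.
  - set (w := n - 2 * x) in *. assert (n = 2 * x + w) by lia. subst n. nia.
Qed.

Lemma classify_large x y rest n :
  StronglySorted ge (x :: y :: rest) -> Forall (lt 0) (x :: y :: rest) -> rest <> [] ->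
  list_sum (x :: y :: rest) = n -> 2 * x <= n -> 21 <= n ->
  2 * sum_sq (x :: y :: rest) + 4 * length (x :: y :: rest) <= n * n.
Proof.
  intros Hs Hpos Hrest Hn Hx Hlarge.
  pose proof (sum_sq_le _ x (sorted_le_head _ _ Hs)) as Hsq1.
  apply StronglySorted_inv in Hs as [Hs Hxs].
  apply sorted_le_head, Forall_cons_iff in Hs as [_ Hyrest].
  apply Forall_cons_iff in Hxs as [Hyx _].
  apply Forall_cons_iff in Hpos as [_ Hpos]. apply Forall_cons_iff in Hpos as [Hy Hrest_pos].
  pose proof (sum_sq_le _ y Hyrest) as Hsq2. pose proof (length_le_sum _ Hrest_pos).
  destruct rest as [|z rest]; [easy|]. simpl length in *.
  rewrite !list_sum_cons in *. rewrite !sum_sq_cons in *. unfold ge in *.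
  apply (large_partition_arith x y (z + list_sum rest)); lia || nia.
Qed.

Lemma classify_partition p n :
  StronglySorted ge p -> Forall (lt 0) p -> list_sum p = n -> 2 <= n -> 2 * hd 0 p <= n ->
  (exists m, p = [m; m]) \/ 2 * sum_sq p + 4 * length p <= n * n \/ In p exceptional_partitions.
Proof.
  intros Hs Hpos Hn Hn2 Hhd.
  destruct p as [|x [|y rest]]; simpl in Hhd.
  - simpl in Hn. lia.
  - rewrite list_sum_cons in Hn. simpl in Hn. lia.
  - destruct rest as [|z rest].
    + left. exists x. apply StronglySorted_inv in Hs as [_ Hx]. apply Forall_inv in Hx.
      rewrite !list_sum_cons in Hn. simpl in Hn. unfold ge in *. do 2 f_equal. lia.
    + right. destruct (Nat.le_gt_cases n 20) as [Hsmall|Hlarge].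
      * destruct (classify_small _ n Hs Hpos Hn Hhd Hsmall) as [Hlen|Hc]; [|exact Hc].
        simpl in Hlen. lia.
      * left. now apply classify_large.
Qed.

Local Open Scope R_scope.

(** * The degree as a power of q times a ratio of products *)

Lemma prodR_cons a l : prodR (a :: l) = a * prodR l.
Proof. reflexivity. Qed.

Lemma prodR_app l1 l2 : prodR (l1 ++ l2) = prodR l1 * prodR l2.
Proof. induction l1 as [|a l1 IH]; simpl; [ring | rewrite IH; ring]. Qed.

Lemma prodR_rev l : prodR (rev l) = prodR l.
Proof. induction l as [|a l IH]; simpl; [reflexivity|]. rewrite prodR_app, IH. simpl. ring. Qed.

Lemma prodR_map_pos {A} (g : A -> R) l : Forall (fun a => 0 < g a) l -> 0 < prodR (map g l).
Proof. induction 1; simpl; [lra | now apply Rmult_lt_0_compat]. Qed.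

Lemma prodR_map_nonneg {A} (g : A -> R) l : Forall (fun a => 0 <= g a) l -> 0 <= prodR (map g l).
Proof. induction 1; simpl; [lra | now apply Rmult_le_pos]. Qed.

Lemma prodR_map_le {A} (g h : A -> R) l :
  Forall (fun a => 0 <= g a <= h a) l -> prodR (map g l) <= prodR (map h l).
Proof.
  intros H. induction H as [|a l Ha Hl IH]; simpl; [lra|].
  apply Rmult_le_compat; try tauto.
  apply prodR_map_nonneg. eapply Forall_impl; [|exact Hl]. simpl; tauto.
Qed.

Lemma pow_antitone x a b : 0 <= x <= 1 -> (a <= b)%nat -> x ^ b <= x ^ a.
Proof.
  intros Hx Hab. replace b with (a + (b - a))%nat by lia. rewrite pow_add.
  assert (x ^ (b - a) <= 1) by (rewrite <- (pow1 (b - a)); apply pow_incr; lra).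
  assert (0 <= x ^ a) by (apply pow_le; lra). nra.
Qed.

Lemma rev_seq s k : rev (seq s k) = map (fun j => s + k - j)%nat (seq 1 k).
Proof.
  revert s; induction k as [|k IH]; intros s; [reflexivity|].
  change (seq s (S k)) with (s :: seq (S s) k). simpl rev.
  rewrite IH, seq_S, map_app. simpl map at 2. f_equal.
  - apply map_ext. intros j. lia.
  - simpl. f_equal. lia.
Qed.

(* [reduced_factor q eps k] is [(q^k - eps^k) / q^k]. *)
Definition reduced_factor (Q eps : R) (k : nat) : R := 1 - (eps / Q) ^ k.

Definition reduced_prod (Q eps : R) (L : list nat) : R := prodR (map (reduced_factor Q eps) L).

Lemma reduced_prod_app Q eps L1 L2 :
  reduced_prod Q eps (L1 ++ L2) = reduced_prod Q eps L1 * reduced_prod Q eps L2.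
Proof. unfold reduced_prod. now rewrite map_app, prodR_app. Qed.

Lemma reduced_prod_seq_rev Q eps s g :
  reduced_prod Q eps (seq s g) = prodR (map (fun j => reduced_factor Q eps (s + g - j)) (seq 1 g)).
Proof. unfold reduced_prod. now rewrite <- prodR_rev, <- map_rev, rev_seq, map_map. Qed.

Lemma prodR_pow_sub_pow Q eps L : Q <> 0 ->
  prodR (map (fun k => Q ^ k - eps ^ k) L) = Q ^ list_sum L * reduced_prod Q eps L.
Proof.
  intros HQ. unfold reduced_prod, reduced_factor.
  induction L as [|k L IH]; [simpl; ring|].
  cbn [map]. rewrite !prodR_cons, IH, list_sum_cons, pow_add.
  unfold Rdiv. rewrite Rpow_mult_distr, pow_inv. field. now apply pow_nonzero.
Qed.

Section ReducedFactor.
Variables Q eps : R.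
Hypothesis HQ : 2 <= Q.
Hypothesis Heps : Rabs eps <= 1.

Lemma reduced_factor_pos k : (1 <= k)%nat -> 0 < reduced_factor Q eps k.
Proof.
  intros Hk. unfold reduced_factor.
  assert (Habs : Rabs (eps / Q) <= / 2).
  { unfold Rdiv. rewrite Rabs_mult, Rabs_inv, (Rabs_pos_eq Q) by lra.
    apply Rle_trans with (1 * / Q).
    - apply Rmult_le_compat_r; [left; apply Rinv_0_lt_compat|]; lra.
    - rewrite Rmult_1_l. apply Rinv_le_contravar; lra. }
  assert ((eps / Q) ^ k <= (/ 2) ^ k) by now apply pow_maj_Rabs.
  assert ((/ 2) ^ k <= (/ 2) ^ 1) by (apply pow_antitone; lra || lia).
  simpl in *. lra.
Qed.

Lemma reduced_prod_pos L : Forall (le 1) L -> 0 < reduced_prod Q eps L.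
Proof. intros H. apply prodR_map_pos. eapply Forall_impl; [|exact H]. apply reduced_factor_pos. Qed.

End ReducedFactor.

(* The exponent of [q] is [a(l) + n(n+1)/2 - sum_h h], i.e. [(n^2 - sum_sq l)/2]. *)
Lemma unip_degree_factorization q eps n l :
  2 <= INR q -> Rabs eps <= 1 -> StronglySorted ge l -> list_sum l = n ->
  exists D, (2 * D = n * n - sum_sq l)%nat /\
    unip_degree q eps n l =
    INR q ^ D * reduced_prod (INR q) eps (seq 1 n) / reduced_prod (INR q) eps (hook_lengths l).
Proof.
  intros HQ Heps Hs Hn.
  pose proof (twice_sum_hook_lengths l Hs). pose proof (twice_sum_seq n).
  pose proof (sum_sq_le_sq_sum l).
  set (D := (a_inv l + list_sum (seq 1 n) - list_sum (hook_lengths l))%nat).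
  exists D. split; [unfold D; nia|].
  pose proof (reduced_prod_pos _ eps HQ Heps _ (hook_lengths_pos l)).
  unfold unip_degree. rewrite !prodR_pow_sub_pow by lra.
  replace (INR q ^ a_inv l * (INR q ^ list_sum (seq 1 n) * reduced_prod (INR q) eps (seq 1 n)))
    with (INR q ^ list_sum (hook_lengths l) * (INR q ^ D * reduced_prod (INR q) eps (seq 1 n))).
  - field. split; [lra | apply pow_nonzero; lra].
  - rewrite <- !Rmult_assoc, <- !pow_add. do 2 f_equal. unfold D. nia.
Qed.

Lemma Rpower_le_pow Q n E : 2 <= Q -> (n * n <= 4 * E)%nat -> Rpower Q (INR (n * n) / 4) <= Q ^ E.
Proof.
  intros HQ H. rewrite <- Rpower_pow by lra. apply Rle_Rpower; [lra|].
  apply le_INR in H. rewrite !mult_INR in *. simpl (INR 4) in H. lra.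
Qed.

Lemma Rpower_le_of_ratio Q n D r N H :
  2 <= Q -> 0 < H -> H <= Q ^ r * N -> (n * n + 4 * r <= 4 * D)%nat ->
  Rpower Q (INR (n * n) / 4) <= Q ^ D * N / H.
Proof.
  intros HQ HH HN Hexp. apply Rle_trans with (Q ^ (D - r)); [apply Rpower_le_pow; [lra | lia]|].
  replace (Q ^ D) with (Q ^ (D - r) * Q ^ r) by (rewrite <- pow_add; f_equal; lia).
  assert (0 < Q ^ (D - r)) by (apply pow_lt; lra).
  apply (Rmult_le_reg_r H); [exact HH|]. unfold Rdiv.
  rewrite Rmult_assoc, Rinv_l, Rmult_1_r by lra. nra.
Qed.

(** * The case eps = 1 *)

Lemma reduced_factor_one_le Q a b : 2 <= Q -> (a <= b)%nat ->
  reduced_factor Q 1 a <= reduced_factor Q 1 b.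
Proof.
  intros HQ Hab. unfold reduced_factor.
  assert (0 <= 1 / Q <= 1).
  { unfold Rdiv. rewrite Rmult_1_l. split; [left; apply Rinv_0_lt_compat; lra|].
    rewrite <- Rinv_1. apply Rinv_le_contravar; lra. }
  pose proof (pow_antitone (1 / Q) a b H Hab). lra.
Qed.

(* The first row's hooks are dominated termwise by the top [x] integers of [1 .. x + |t|]. *)
Lemma hook_prod_le_seq_prod_one Q l : 2 <= Q -> StronglySorted ge l ->
  reduced_prod Q 1 (hook_lengths l) <= reduced_prod Q 1 (seq 1 (list_sum l)).
Proof.
  intros HQ. induction 1 as [|x t Ht IH Hx]; [unfold reduced_prod; simpl; lra|].
  assert (Habs : Rabs 1 <= 1) by (rewrite Rabs_R1; lra).
  rewrite hook_lengths_cons, list_sum_cons, Nat.add_comm, seq_app, !reduced_prod_app by exact Hx.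
  rewrite (Rmult_comm (reduced_prod Q 1 (first_row_hooks x t))).
  apply Rmult_le_compat; [| |exact IH|].
  - left. apply reduced_prod_pos; auto. apply hook_lengths_pos.
  - left. apply reduced_prod_pos; auto. unfold first_row_hooks.
    apply Forall_forall. intros h Hh. apply in_map_iff in Hh as [j [<- _]]. lia.
  - rewrite reduced_prod_seq_rev. unfold reduced_prod, first_row_hooks. rewrite map_map.
    apply prodR_map_le, Forall_forall. intros j Hj. apply in_seq in Hj.
    pose proof (conj_part_le_sum t j ltac:(lia)).
    split; [left; apply reduced_factor_pos; auto; lia|].
    apply reduced_factor_one_le; [exact HQ | lia].
Qed.

(** * The case eps = -1 *)

Lemma neg_one_pow k : (-1) ^ k = if Nat.odd k then -1 else 1.
Proof.
  induction k as [|k IH]; [reflexivity|]. simpl pow. rewrite IH, Nat.odd_succ, <- Nat.negb_odd.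
  destruct (Nat.odd k); simpl; ring.
Qed.

Section MinusOne.
Variable Q : R.
Hypothesis HQ : 2 <= Q.

Local Notation f := (reduced_factor Q (-1)).
Local Notation block s g := (reduced_prod Q (-1) (seq s g)).

Let Habs : Rabs (-1) <= 1.
Proof. rewrite Rabs_left; lra. Qed.

Lemma inv_Q_bounds : 0 < / Q <= / 2.
Proof. split; [apply Rinv_0_lt_compat | apply Rinv_le_contravar]; lra. Qed.

Lemma inv_Q_pow_pos k : 0 < (/ Q) ^ k.
Proof. apply pow_lt. apply inv_Q_bounds. Qed.

Lemma inv_Q_pow_le k : (1 <= k)%nat -> (/ Q) ^ k <= / 2.
Proof.
  intros Hk. pose proof inv_Q_bounds.
  assert ((/ Q) ^ k <= (/ Q) ^ 1) by (apply pow_antitone; lra || lia). simpl in *. lra.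
Qed.

Lemma reduced_factor_minus_one k : f k = if Nat.odd k then 1 + (/ Q) ^ k else 1 - (/ Q) ^ k.
Proof.
  unfold reduced_factor, Rdiv. rewrite Rpow_mult_distr, neg_one_pow. destruct (Nat.odd k); ring.
Qed.

Lemma block_succ s g : block s (S g) = f s * block (S s) g.
Proof. reflexivity. Qed.

Lemma block_nonneg s g : (1 <= s)%nat -> 0 <= block s g.
Proof.
  intros Hs. left. apply reduced_prod_pos; auto.
  apply Forall_forall. intros h Hh. apply in_seq in Hh. lia.
Qed.

(* The factors alternate above and below 1 and shrink geometrically, so the pairs
   [f s * f (s + 1)] lie on the same side of 1 as [f s]. *)
Lemma block_parity g s : (1 <= s)%nat ->
  (Nat.odd s = true -> 1 <= block s g) /\ (Nat.odd s = false -> block s g <= 1).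
Proof.
  revert s. induction g as [g IH] using (well_founded_induction lt_wf). intros s Hs.
  destruct g as [|[|g]].
  - change (block s 0) with 1. split; intros; lra.
  - rewrite block_succ. change (block (S s) 0) with 1.
    rewrite Rmult_1_r, reduced_factor_minus_one. pose proof (inv_Q_pow_pos s).
    split; intros E; rewrite E; lra.
  - rewrite !block_succ, (reduced_factor_minus_one s), (reduced_factor_minus_one (S s)).
    rewrite Nat.odd_succ, <- Nat.negb_odd. simpl pow.
    pose proof (inv_Q_pow_le s Hs). pose proof (inv_Q_pow_pos s). pose proof inv_Q_bounds.
    destruct (IH g ltac:(lia) (S (S s)) ltac:(lia)) as [IHodd IHeven].
    rewrite Nat.odd_succ, Nat.even_succ in IHodd, IHeven.
    pose proof (block_nonneg (S (S s)) g ltac:(lia)).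
    destruct (Nat.odd s); simpl; split; intros E; try discriminate.
    + specialize (IHodd eq_refl).
      assert (1 <= (1 + (/ Q) ^ s) * (1 - / Q * (/ Q) ^ s)) by nra. nra.
    + specialize (IHeven eq_refl).
      assert (0 <= (1 - (/ Q) ^ s) * (1 + / Q * (/ Q) ^ s) <= 1) by (split; nra). nra.
Qed.

Lemma block_lower s g : (1 <= s)%nat -> 1 - (/ Q) ^ s <= block s g.
Proof.
  intros Hs. pose proof (inv_Q_pow_pos s). destruct (Nat.odd s) eqn:E.
  - pose proof (proj1 (block_parity g s Hs) E). lra.
  - destruct g as [|g]; [change (block s 0) with 1; lra|].
    rewrite block_succ, reduced_factor_minus_one, E.
    assert (Hodd : Nat.odd (S s) = true) by now rewrite Nat.odd_succ, <- Nat.negb_odd, E.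
    pose proof (proj1 (block_parity g (S s) ltac:(lia)) Hodd).
    pose proof (inv_Q_pow_le s Hs). nra.
Qed.

Lemma block_upper_odd s g : (1 <= s)%nat -> Nat.odd s = true -> block s g <= 1 + (/ Q) ^ s.
Proof.
  intros Hs E. pose proof (inv_Q_pow_pos s). destruct g as [|g]; [change (block s 0) with 1; lra|].
  rewrite block_succ, reduced_factor_minus_one, E.
  assert (Heven : Nat.odd (S s) = false) by now rewrite Nat.odd_succ, <- Nat.negb_odd, E.
  pose proof (proj2 (block_parity g (S s) ltac:(lia)) Heven).
  pose proof (block_nonneg (S s) g ltac:(lia)). nra.
Qed.

Definition odd_factor (b : nat) : R := if Nat.odd b then f b else 1.

Definition odd_prod (s k : nat) : R := prodR (map odd_factor (seq s k)).

Lemma odd_factor_ge1 b : 1 <= odd_factor b.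
Proof.
  unfold odd_factor. destruct (Nat.odd b) eqn:E; [|lra].
  rewrite reduced_factor_minus_one, E. pose proof (inv_Q_pow_pos b). lra.
Qed.

Lemma reduced_factor_le_odd_factor b : (1 <= b)%nat -> 0 <= f b <= odd_factor b.
Proof.
  intros Hb. split; [left; now apply reduced_factor_pos|].
  unfold odd_factor. destruct (Nat.odd b) eqn:E; [lra|].
  rewrite reduced_factor_minus_one, E. pose proof (inv_Q_pow_pos b). lra.
Qed.

Lemma odd_prod_ge1 s k : 1 <= odd_prod s k.
Proof.
  revert s; induction k as [|k IH]; intros s; unfold odd_prod in *; simpl; [lra|].
  pose proof (odd_factor_ge1 s). specialize (IH (S s)). nra.
Qed.

Lemma odd_prod_succ_r s k : odd_prod s (S k) = odd_prod s k * odd_factor (s + k).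
Proof. unfold odd_prod. rewrite seq_S, map_app, prodR_app. simpl. ring. Qed.

Lemma odd_prod_le s k k' : (k <= k')%nat -> odd_prod s k <= odd_prod s k'.
Proof.
  induction 1 as [|k' _ IH]; [lra|]. rewrite odd_prod_succ_r.
  pose proof (odd_factor_ge1 (s + k')). pose proof (odd_prod_ge1 s k'). nra.
Qed.

(* The odd factors are [1 + t^b] for [b = s, s + 2, ...] with [t = 1/Q <= 1/2],
   and [t^2 <= 1/4] keeps the accumulated excess below [2 t^s]. *)
Lemma odd_prod_bound k s : (1 <= s)%nat ->
  odd_prod s k <= 1 + 2 * (/ Q) ^ (if Nat.odd s then s else S s).
Proof.
  revert s. induction k as [|k IH]; intros s Hs.
  - unfold odd_prod. simpl. pose proof (inv_Q_pow_pos s). pose proof (inv_Q_pow_pos (S s)).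
    destruct (Nat.odd s); lra.
  - unfold odd_prod. cbn [seq map]. rewrite prodR_cons. fold (odd_prod (S s) k).
    specialize (IH (S s) ltac:(lia)). rewrite Nat.odd_succ, <- Nat.negb_odd in IH.
    pose proof (odd_prod_ge1 (S s) k).
    unfold odd_factor. destruct (Nat.odd s) eqn:E; simpl in IH |- *; [|lra].
    rewrite reduced_factor_minus_one, E. pose proof (inv_Q_pow_le s Hs).
    pose proof (inv_Q_pow_pos s). pose proof inv_Q_bounds.
    assert (/ Q * / Q <= / 4) by nra.
    assert (/ Q * (/ Q * (/ Q) ^ s) <= / 4 * (/ Q) ^ s).
    { rewrite <- Rmult_assoc. apply Rmult_le_compat_r; lra. }
    nra.
Qed.

Lemma decreasing_prod_le_odd_prod L k :
  StronglySorted gt L -> Forall (le 1) L -> Forall (ge k) L -> prodR (map f L) <= odd_prod 1 k.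
Proof.
  intros Hs. revert k. induction Hs as [|h L Hs IH Hh]; intros k Hpos Hk.
  - apply odd_prod_ge1.
  - apply Forall_cons_iff in Hpos as [Hh1 Hpos]. apply Forall_cons_iff in Hk as [Hhk _].
    cbn [map]. rewrite prodR_cons.
    assert (HL : prodR (map f L) <= odd_prod 1 (h - 1)).
    { apply IH; [exact Hpos|]. eapply Forall_impl; [|exact Hh]. unfold gt, ge. lia. }
    assert (Hodd : odd_prod 1 (h - 1) * odd_factor h <= odd_prod 1 k).
    { replace h with (1 + (h - 1))%nat at 2 by lia. rewrite <- odd_prod_succ_r.
      apply odd_prod_le. unfold ge in Hhk. lia. }
    pose proof (reduced_factor_le_odd_factor h Hh1).
    assert (0 <= prodR (map f L)).
    { apply prodR_map_nonneg. eapply Forall_impl; [|exact Hpos].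
      intros a Ha. left. now apply reduced_factor_pos. }
    nra.
Qed.

Lemma first_row_prod_le x t : reduced_prod Q (-1) (first_row_hooks x t) <= Q.
Proof.
  apply Rle_trans with (odd_prod 1 (x + list_sum t)).
  - apply decreasing_prod_le_odd_prod.
    + apply StronglySorted_map_seq. intros j Hj Hjx.
      pose proof (conj_part_antitone t j (S j) ltac:(lia)). lia.
    + apply Forall_forall. intros h Hh. apply in_map_iff in Hh as [j [<- _]]. lia.
    + apply Forall_forall. intros h Hh.
      apply in_map_iff in Hh as [j [<- Hj]]. apply in_seq in Hj.
      pose proof (conj_part_le_sum t j ltac:(lia)). unfold ge. lia.
  - eapply Rle_trans; [apply odd_prod_bound; lia|]. simpl. pose proof inv_Q_bounds. lra.
Qed.

Lemma hook_prod_le_pow_length l : StronglySorted ge l ->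
  reduced_prod Q (-1) (hook_lengths l) <= Q ^ length l.
Proof.
  induction 1 as [|x t Ht IH Hx]; [unfold reduced_prod; simpl; lra|].
  rewrite hook_lengths_cons, reduced_prod_app by exact Hx. simpl length. simpl pow.
  apply Rmult_le_compat; [| |apply first_row_prod_le | exact IH].
  - left. apply reduced_prod_pos; auto. unfold first_row_hooks.
    apply Forall_forall. intros h Hh. apply in_map_iff in Hh as [j [<- _]]. lia.
  - left. apply reduced_prod_pos; auto. apply hook_lengths_pos.
Qed.

Lemma block_two_le_shift m : block 2 m <= block (S m) m.
Proof.
  destruct m as [|[|m]]; [right; reflexivity | right; reflexivity |]. pose proof inv_Q_bounds.
  assert (Hlow : block 2 (S (S m)) <= (1 - (/ Q) ^ 2) * (1 + (/ Q) ^ 3)).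
  { rewrite block_succ, reduced_factor_minus_one. simpl Nat.odd. cbv iota.
    apply Rmult_le_compat_l; [simpl; nra|]. apply block_upper_odd; [lia | reflexivity]. }
  assert (Hhigh : 1 - (/ Q) ^ 3 <= block (S (S (S m))) (S (S m))).
  { eapply Rle_trans; [|apply block_lower; lia].
    assert ((/ Q) ^ (S (S (S m))) <= (/ Q) ^ 3) by (apply pow_antitone; lra || lia). lra. }
  assert (0 <= / Q * / Q * (1 - 2 * / Q + (/ Q) ^ 3)).
  { apply Rmult_le_pos; [nra|]. assert (0 <= (/ Q) ^ 3) by (apply pow_le; lra). lra. }
  simpl in *. nra.
Qed.

Lemma two_row_hook_prod_le m : reduced_prod Q (-1) (hook_lengths [m; m]) <= block 1 (m + m).
Proof.
  rewrite !hook_lengths_cons by repeat constructor. change (hook_lengths []) with (@nil nat).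
  rewrite app_nil_r, reduced_prod_app, seq_app, reduced_prod_app.
  assert (Hrows : forall s c, (1 <= s)%nat ->
            (forall j, (1 <= j <= m)%nat -> conj_part c j = (s - 1)%nat) ->
            reduced_prod Q (-1) (first_row_hooks m c) = block s m).
  { intros s c Hs Hc. rewrite reduced_prod_seq_rev. unfold reduced_prod, first_row_hooks.
    rewrite map_map. apply f_equal, map_ext_in. intros j Hj. apply in_seq in Hj.
    rewrite Hc by lia. f_equal. lia. }
  assert (Hrow1 : reduced_prod Q (-1) (first_row_hooks m [m]) = block 2 m).
  { apply Hrows; [lia|]. intros j Hj. rewrite conj_part_cons.
    destruct (Nat.leb_spec j m); [reflexivity | lia]. }
  assert (Hrow2 : reduced_prod Q (-1) (first_row_hooks m []) = block 1 m)
    by (apply Hrows; [lia | reflexivity]).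
  rewrite Hrow1, Hrow2, Rmult_comm. apply Rmult_le_compat_l; [apply block_nonneg; lia|].
  apply block_two_le_shift.
Qed.

End MinusOne.

(** * The exceptional partitions *)

Definition hornerR (cs : list R) (s : R) : R := fold_right (fun c acc => c + s * acc) 0 cs.

Lemma hornerR_nonneg cs s : 0 <= s -> Forall (Rle 0) cs -> 0 <= hornerR cs s.
Proof.
  intros Hs. induction 1 as [|c cs Hc _ IH]; simpl; [lra|].
  apply Rplus_le_le_0_compat; [exact Hc | now apply Rmult_le_pos].
Qed.

(* A certificate is the expansion, in powers of [q - 2], of
   [q^a(lam) * prod (q^i - (-1)^i) - q^K * prod_h (q^h - (-1)^h)]. *)
Lemma unip_degree_ge_by_certificate q n lam K cs :
  2 <= INR q -> (n * n <= 4 * K)%nat -> Forall (Rle 0) cs ->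
  (forall s, (s + 2) ^ a_inv lam * prodR (map (fun k => (s + 2) ^ k - (-1) ^ k) (seq 1 n))
     - (s + 2) ^ K * prodR (map (fun k => (s + 2) ^ k - (-1) ^ k) (hook_lengths lam))
     = hornerR cs s) ->
  Rpower (INR q) (INR (n * n) / 4) <= unip_degree q (-1) n lam.
Proof.
  intros HQ HK Hcs Hid. apply Rle_trans with (INR q ^ K); [now apply Rpower_le_pow|].
  set (H := prodR (map (fun k => INR q ^ k - (-1) ^ k) (hook_lengths lam))).
  assert (HH : 0 < H).
  { unfold H. rewrite prodR_pow_sub_pow by lra. apply Rmult_lt_0_compat; [apply pow_lt; lra|].
    apply reduced_prod_pos; [lra | rewrite Rabs_left; lra | apply hook_lengths_pos]. }
  specialize (Hid (INR q - 2)). replace (INR q - 2 + 2) with (INR q) in Hid by ring.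
  pose proof (hornerR_nonneg cs (INR q - 2) ltac:(lra) Hcs).
  unfold unip_degree. fold H in Hid |- *. apply (Rmult_le_reg_r H); [exact HH|].
  unfold Rdiv. rewrite Rmult_assoc, Rinv_l, Rmult_1_r by lra. lra.
Qed.

Ltac certify K cs :=
  apply (unip_degree_ge_by_certificate _ _ _ K cs);
    [assumption | lia | repeat constructor; lra |];
  lazymatch goal with |- context [hook_lengths ?l] =>
    let hs := eval vm_compute in (hook_lengths l) in change (hook_lengths l) with hs end;
  lazymatch goal with |- context [a_inv ?l] =>
    let a := eval vm_compute in (a_inv l) in change (a_inv l) with a end;
  intros s; unfold hornerR; cbn [seq map prodR fold_right]; ring.

Lemma exceptional_partitions_bound q n p :
  2 <= INR q -> In p exceptional_partitions -> list_sum p = n ->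
  Rpower (INR q) (INR (n * n) / 4) <= unip_degree q (-1) n p.
Proof.
  intros HQ Hp Hn. simpl in Hp.
  repeat (destruct Hp as [<- | Hp]; [cbn in Hn; subst n|]); [| | | | | | | | | destruct Hp].
  - certify 3%nat [0].
  - certify 4%nat
      [3240; 24732; 85590; 177897; 247954; 244965; 176668; 94274; 37260; 10782; 2222; 309;
       26; 1].
  - certify 4%nat
      [58320; 493776; 1940760; 4705344; 7883685; 9687147; 9036384; 6531281; 3698147;
       1646394; 574508; 155502; 32007; 4843; 508; 33; 1].
  - certify 7%nat
      [174960; 1947888; 10064088; 32169312; 71491383; 117598401; 148730097; 148204335;
       118213756; 76217147; 39916692; 16992687; 5858971; 1622603; 355805; 60385; 7650; 681;
       38; 1].
  - certify 7%nat
      [1539648; 17589312; 94249008; 316016640; 745525836; 1318038516; 1814917485;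
       1996107090; 1783353037; 1308806268; 794519551; 400325688; 167464208; 57994695;
       16522366; 3831936; 711960; 103440; 11322; 878; 43; 1].
  - certify 7%nat
      [35925120; 458830656; 2803950432; 10915730640; 30404112840; 64510113228;
       108382448130; 147958587359; 167101451213; 158134812289; 126536842167; 86149713961;
       50100629074; 24935697947; 10622258241; 3865884864; 1197484420; 313786104; 68939333;
       12539689; 1855042; 217535; 19457; 1247; 51; 1].
  - certify 9%nat
      [3464208; 118098000; 1085924232; 5380171632; 17613498033; 41963621643; 76892928993;
       112234508064; 133618197708; 131903699256; 109226847039; 76482151359; 45521250423;
       23096336597; 9997412872; 3687285145; 1154882075; 305407038; 67603891; 12371522;
       1838938; 216433; 19409; 1246; 51; 1].
  - certify 9%nat
      [138148416; 1912242816; 12704790384; 53951136048; 164505013452; 383576129856;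
       711203925825; 1076483533599; 1354939232907; 1437271435161; 1297494013802;
       1003895395888; 669005431583; 385207535723; 191938740971; 82768675131; 30845497950;
       9904679130; 2727329127; 639562111; 126504171; 20828987; 2802964; 300350; 24649;
       1455; 55; 1].
  - certify 13%nat
      [7471141920; 126381061296; 1035135653472; 5468213523816; 20937549704274;
       61913324614599; 147106910071341; 288505790402241; 476112660946212; 670653857580916;
       815124774723113; 861988030040792; 798209548619993; 650435598033848; 468122994987778;
       298348216385472; 168666817581904; 84652728077026; 37719187324424; 14908751024792;
       5218582798829; 1613490107900; 439030902623; 104619970113; 21694319709; 3882241533;
       593099423; 76258280; 8094772; 690561; 45506; 2174; 67; 1].
Qed.

Lemma unip_degree_lower_bound q eps n p :
  2 <= INR q -> eps = 1 \/ eps = -1 -> StronglySorted ge p -> Forall (lt 0) p ->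
  list_sum p = n -> (2 <= n)%nat -> (2 * hd 0 p <= n)%nat ->
  Rpower (INR q) (INR (n * n) / 4) <= unip_degree q eps n p.
Proof.
  intros HQ Heps Hs Hpos Hn Hn2 Hhd.
  assert (Habs : Rabs eps <= 1)
    by (destruct Heps as [-> | ->]; [rewrite Rabs_R1 | rewrite Rabs_left]; lra).
  assert (Hsq : (2 * sum_sq p <= n * n)%nat).
  { destruct p as [|x t]; [simpl in Hn; lia|].
    pose proof (sum_sq_le _ x (sorted_le_head _ _ Hs)). simpl in Hhd. nia. }
  pose proof (reduced_prod_pos _ eps HQ Habs _ (hook_lengths_pos p)) as HH.
  destruct Heps as [-> | ->].
  - destruct (unip_degree_factorization q 1 n p HQ Habs Hs Hn) as [D [HD ->]].
    apply (Rpower_le_of_ratio _ _ _ 0); [exact HQ | exact HH | | lia].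
    rewrite pow_O, Rmult_1_l, <- Hn. now apply hook_prod_le_seq_prod_one.
  - destruct (classify_partition p n Hs Hpos Hn Hn2 Hhd) as [[m ->] | [Hbound | Hexc]].
    + destruct (unip_degree_factorization q (-1) n _ HQ Habs Hs Hn) as [D [HD ->]].
      apply (Rpower_le_of_ratio _ _ _ 0); [exact HQ | exact HH | | lia].
      rewrite pow_O, Rmult_1_l, <- Hn. replace (list_sum [m; m]) with (m + m)%nat by (simpl; lia).
      now apply two_row_hook_prod_le.
    + destruct (unip_degree_factorization q (-1) n p HQ Habs Hs Hn) as [D [HD ->]].
      apply (Rpower_le_of_ratio _ _ _ (length p)); [exact HQ | exact HH | | lia].
      pose proof (proj1 (block_parity (INR q) HQ n 1 (le_n 1)) eq_refl).
      pose proof (hook_prod_le_pow_length (INR q) HQ p Hs).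
      assert (0 < INR q ^ length p) by (apply pow_lt; lra). nra.
    + now apply exceptional_partitions_bound.
Qed.

Lemma prime_power_ge_2 q : prime_power q -> 2 <= INR q.
Proof.
  intros [p [k [Hp [Hk Hq]]]].
  assert (2 <= p)%Z by now apply prime_ge_2.
  assert (p ^ 1 <= p ^ Z.of_nat k)%Z by (apply Z.pow_le_mono_r; lia).
  replace 2 with (INR 2) by reflexivity. apply le_INR. lia.
Qed.

Theorem lemma6p5 (q n : nat) (eps : R) (lam : list nat) :
  prime_power q ->
  (2 <= n)%nat ->
  (eps = 1 \/ eps = -1) ->
  is_partition lam n ->
  (2 * part lam 1 <= n)%nat ->
  Rpower (INR q) (INR (n * n) / 4) <= unip_degree q eps n lam.
Proof.
  intros Hq Hn Heps Hlam Hhead.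
  pose proof (StronglySorted_of_nth lam (proj1 Hlam)) as Hsorted.
  destruct (partition_positive_parts lam n Hlam) as [p [k [-> [Hs [Hpos Hsum]]]]].
  rewrite unip_degree_app_zeros by exact Hsorted.
  apply unip_degree_lower_bound; auto using prime_power_ge_2.
  destruct p as [|x p]; [simpl in Hsum; lia | exact Hhead].
Qed.
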